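(* Let $v$ be an aperiodic infinite word over $\{0,1\}$ such that $\Phi_{\mathbb{R}}(v)$ exists, and for $\ell\ge1$ let $u^{(\ell)}$ be its prefix of length $\ell$. Then $$\lim_{\ell\to\infty}C_{\mathbb{R}}(u^{(\ell)})=\Phi_{\mathbb{R}}(v).$$
   Context: For a finite $0$-$1$ word $u$ of length $\ell\ge1$ and height $h$ (number of $1$'s) with $1$'s at positions $d_0<\dots<d_{h-1}$, let $\varphi(u)=\sum_{i=0}^{h-1}3^{h-1-i}2^{d_i}$ and $C_{\mathbb{R}}(u)=\varphi(u)/(2^\ell-3^h)\in\mathbb{Q}$. For an infinite word $v$ with $1$'s at positions $d_0<d_1<\cdots$, $\Phi_{\mathbb{R}}(v)=-\sum_{i\ge0}2^{d_i}/3^{i+1}$, said to exist if the series converges in $\mathbb{R}$. *)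

From HB Require Import structures.
From mathcomp Require Import all_boot all_order all_algebra.
From mathcomp Require Import all_classical all_reals all_analysis.
Set Implicit Arguments. Unset Strict Implicit. Unset Printing Implicit Defensive.
Import Order.TTheory GRing.Theory Num.Theory.
Local Open Scope ring_scope.

(* A finite 0-1 word is a seq bool (true = 1); an infinite word is nat -> bool.
   Positions are numbered from 0. *)

Definition ones_pos (u : seq bool) : seq nat :=
  [seq i <- iota 0 (size u) | nth false u i].

Definition height (u : seq bool) : nat := size (ones_pos u).

Definition phi (u : seq bool) : nat :=
  (\sum_(i < height u) 3 ^ (height u - 1 - i) * 2 ^ (nth 0 (ones_pos u) i))%N.

Definition C_R {R : realType} (u : seq bool) : R :=
  (phi u)%:R / (2 ^+ size u - 3 ^+ height u).

Definition word_prefix (v : nat -> bool) (l : nat) : seq bool := mkseq v l.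

Definition enum_ones (v : nat -> bool) (d : nat -> nat) : Prop :=
  (forall i, (d i < d i.+1)%N) /\ (forall n, v n = true <-> exists i, d i = n).

Definition eventually_periodic (v : nat -> bool) : Prop :=
  exists p N : nat, (0 < p)%N /\ forall n, (N <= n)%N -> v (n + p) = v n.

Definition aperiodic (v : nat -> bool) : Prop := ~ eventually_periodic v.

(* general term of the series Phi_R(v) = - sum_i 2^(d_i) / 3^(i+1) *)
Definition Phi_term {R : realType} (d : nat -> nat) (i : nat) : R :=
  - (2 ^+ d i / 3 ^+ i.+1).

From HB Require Import structures.
From mathcomp Require Import all_boot all_order all_algebra.
From mathcomp Require Import all_classical all_reals all_analysis.
From mathcomp Require Import zify.
Import Order.TTheory GRing.Theory Num.Theory numFieldNormedType.Exports.
Local Open Scope classical_set_scope.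
Local Open Scope ring_scope.

(* Let h_l be the height of the prefix u^(l) of length l, and
   S_n = sum_(i<n) 2^(d_i)/3^(i+1), so that the n-th partial sum of the
   series Phi_R(v) is -S_n.
   1. For any finite word u of length l and height h,
        phi(u) = 3^h S_h(u)   and hence   C_R(u) = S_h(u) / (2^l/3^h - 1),
      where S_h(u) is built from the positions of the 1's of u.
   2. The 1's of u^(l) are exactly d_0 < ... < d_(h_l - 1), and the next 1 of
      v lies at or after position l, i.e. l <= d_(h_l).  Since v has
      infinitely many 1's, h_l tends to infinity.
   3. Hence S_(h_l) --> -Phi_R(v).  Moreover the ratio 2^l/3^(h_l) is at most
      3 * 2^(d_(h_l))/3^(h_l + 1), three times a term of the convergent series,
      so it tends to 0, and C_R(u^(l)) --> -Phi_R(v) / (0 - 1) = Phi_R(v). *)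

Definition ones_series {R : realType} (u : seq bool) : R :=
  \sum_(i < height u) 2 ^+ nth 0%N (ones_pos u) i / 3 ^+ i.+1.

Section FiniteWords.
Variable R : realType.

Lemma phi_ones_series (u : seq bool) :
  (phi u)%:R = 3 ^+ height u * @ones_series R u.
Proof.
rewrite /phi natr_sum /ones_series mulr_sumr; apply: eq_bigr => i _.
rewrite natrM !natrX.
have split3 : (3 : R) ^+ height u = 3 ^+ (height u - 1 - i) * 3 ^+ i.+1.
  by rewrite -exprD; congr (_ ^+ _); have := ltn_ord i; lia.
by rewrite split3 -mulrA [_ * (_ / _)]mulrC divfK // expf_neq0.
Qed.

Lemma C_R_ones_series (u : seq bool) :
  @C_R R u = ones_series u / (2 ^+ size u / 3 ^+ height u - 1).
Proof.
have h3 : (3 ^+ height u : R) != 0 by rewrite expf_neq0.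
have -> : 2 ^+ size u / 3 ^+ height u - 1 =
    (2 ^+ size u - 3 ^+ height u) / 3 ^+ height u :> R by rewrite mulrBl divff.
by rewrite /C_R phi_ones_series invf_div mulrA [_ * ones_series u]mulrC.
Qed.

End FiniteWords.

Lemma ones_pos_prefix (v : nat -> bool) (l : nat) :
  ones_pos (word_prefix v l) = [seq i <- iota 0 l | v i].
Proof.
rewrite /ones_pos /word_prefix size_mkseq; apply: eq_in_filter => i.
by rewrite mem_iota add0n => /andP[_ hi]; rewrite nth_mkseq.
Qed.

Section Enumeration.
Context {v : nat -> bool} {d : nat -> nat}.
Hypothesis v_d : enum_ones v d.

Lemma enum_ones_mono : {mono d : i j / (i <= j)%N}.
Proof. exact/leq_mono/(homo_ltn ltn_trans (proj1 v_d)). Qed.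

Lemma ones_below_enum (l : nat) : exists k,
  [seq i <- iota 0 l | v i] = map d (iota 0 k) /\ (l <= d k)%N.
Proof.
have [_ v_one] := v_d.
elim: l => [|l [k [below_l next_ge]]]; first by exists 0%N.
have iotaS : [seq i <- iota 0 l.+1 | v i] =
    [seq i <- iota 0 l | v i] ++ (if v l then [:: l] else [::]).
  by rewrite -addn1 iotaD filter_cat /= add0n; case: (v l).
case vl: (v l); last first.
  exists k; rewrite iotaS vl cats0; split=> //.
  rewrite ltn_neqAle next_ge andbT; apply/negP => /eqP lk.
  by have := proj2 (v_one (d k)) (ex_intro _ k erefl); rewrite -lk vl.
have [j dj] := proj1 (v_one l) vl.
have jk : j = k.
  apply/eqP; rewrite eqn_leq -(enum_ones_mono j k) dj next_ge /= leqNgt.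
  apply/negP => jk.
  have : d j \in [seq i <- iota 0 l | v i].
    by rewrite below_l map_f // mem_iota.
  by rewrite dj mem_filter mem_iota add0n ltnn !andbF.
move: dj; rewrite jk => dk.
exists k.+1; rewrite iotaS vl below_l -addn1 iotaD map_cat /= add0n dk.
by split=> //; rewrite -dk addn1; exact: (proj1 v_d).
Qed.

Lemma prefix_ones (l : nat) :
  ones_pos (word_prefix v l) = map d (iota 0 (height (word_prefix v l))) /\
  (l <= d (height (word_prefix v l)))%N.
Proof.
have [k [below_l next_ge]] := ones_below_enum l.
have hk : height (word_prefix v l) = k.
  by rewrite /height ones_pos_prefix below_l size_map size_iota.
by rewrite hk ones_pos_prefix.
Qed.

Lemma height_prefix_gt (k l : nat) :
  (d k < l)%N -> (k < height (word_prefix v l))%N.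
Proof.
move=> dkl; rewrite ltnNge; apply/negP.
rewrite -enum_ones_mono => le_dh.
by have := leq_ltn_trans (leq_trans (proj2 (prefix_ones l)) le_dh) dkl; rewrite ltnn.
Qed.

Lemma height_prefix_cvg : height (word_prefix v l) @[l --> \oo] --> \oo.
Proof.
move=> A [N _ NA]; exists (d N).+1 => // l dNl; apply: NA => /=.
exact/ltnW/height_prefix_gt.
Qed.

Context {R : realType}.

Lemma ones_series_prefix (l : nat) :
  @ones_series R (word_prefix v l) =
  - series (@Phi_term R d) (height (word_prefix v l)).
Proof.
rewrite /ones_series /series /= big_mkord -sumrN; apply: eq_bigr => i _.
have [-> _] := prefix_ones l.
by rewrite (nth_map 0%N) ?size_iota // nth_iota // /Phi_term opprK.
Qed.

Lemma ratio_prefix_le (l : nat) :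
  0 <= (2 ^+ l / 3 ^+ height (word_prefix v l) : R) <=
  3 * - @Phi_term R d (height (word_prefix v l)).
Proof.
rewrite divr_ge0 ?exprn_ge0 //= /Phi_term opprK exprS invfM mulrCA.
rewrite [3 * _]mulrA mulfV // mul1r ler_pM2r ?invr_gt0 ?exprn_gt0 //.
by rewrite ler_eXn2l ?ltr1n //; exact: (proj2 (prefix_ones l)).
Qed.

Lemma ratio_prefix_cvg : @Phi_term R d n @[n --> \oo] --> 0 ->
  (2 ^+ l / 3 ^+ height (word_prefix v l) : R) @[l --> \oo] --> 0.
Proof.
move=> term_cvg; pose h l := height (word_prefix v l).
apply: (@squeeze_cvgr _ _ _ _ (fun=> 0) (fun l => 3 * - @Phi_term R d (h l))).
- exact: filterE ratio_prefix_le.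
- exact: cvg_cst.
- rewrite -(mulr0 3) -oppr0; apply: cvgM; first exact: cvg_cst.
  by apply: cvgN; apply: cvg_comp height_prefix_cvg term_cvg.
Qed.

End Enumeration.

Theorem lemma32 (R : realType) (v : nat -> bool) (d : nat -> nat) (Phi : R) :
  aperiodic v -> enum_ones v d ->
  series (@Phi_term R d) @ \oo --> Phi ->
  (fun l : nat => @C_R R (word_prefix v l)) @ \oo --> Phi.
Proof.
move=> _ v_d series_Phi.
pose h l := height (word_prefix v l).
have h_cvg : h l @[l --> \oo] --> \oo := height_prefix_cvg v_d.
have term_cvg : @Phi_term R d n @[n --> \oo] --> 0.
  exact: cvg_series_cvg_0 (cvgP _ series_Phi).
have sum_cvg : @ones_series R (word_prefix v l) @[l --> \oo] --> - Phi.
  rewrite (_ : (fun l => _) = - (series (@Phi_term R d) \o h)).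
    by apply: cvgN; apply: cvg_comp h_cvg series_Phi.
  by apply/funext => l; rewrite (ones_series_prefix v_d).
have ratio_cvg := ratio_prefix_cvg v_d term_cvg.
have denom_cvg : (2 ^+ l / 3 ^+ h l - 1 : R) @[l --> \oo] --> (0 - 1 : R).
  by apply: cvgB => //; exact: cvg_cst.
have denom_neq0 : (0 - 1 : R) != 0 by rewrite sub0r oppr_eq0 oner_neq0.
rewrite (_ : Phi = - Phi / (0 - 1)); last first.
  by rewrite sub0r invrN mulrN mulNr opprK invr1 mulr1.
have C_R_eq : (fun l => @C_R R (word_prefix v l)) =
    fun l => ones_series (word_prefix v l) / (2 ^+ l / 3 ^+ h l - 1).
  by apply/funext => l; rewrite C_R_ones_series size_mkseq.
rewrite C_R_eq; exact: cvgM sum_cvg (cvgV denom_neq0 denom_cvg).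
Qed.
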